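(* Let $\mathcal{U}$ be a free ultrafilter on $\mathbb{N}$. If $\{2^{(2^k)} : k \in \mathbb{N},\ k \text{ odd}\} \in \mathcal{U}$, then $$\alpha - \sqrt{\alpha} \;<\; \mathrm{num}_{\mathcal{U}}(\mathbb{S}) \;<\; \alpha - \sqrt{\alpha} + \alpha^{1/4}.$$ If $\{2^{(2^k)} : k \in \mathbb{N},\ k \text{ even}\} \in \mathcal{U}$, then $$\sqrt{\alpha} - \alpha^{1/4} \;<\; \mathrm{num}_{\mathcal{U}}(\mathbb{S}) \;<\; \sqrt{\alpha}.$$
   Context: $\mathbb{N} = \{1,2,3,\ldots\}$; for $S \subseteq \mathbb{N}$, $f_n(S) = |S \cap \{1,\ldots,n\}|$. The set $\mathbb{S}$ is defined by: $n \in \mathbb{S}$ iff $n \geq 2$ and $\lceil \log_2(\log_2 n)\rceil$ is odd. Given a free ultrafilter $\mathcal{U}$ on $\mathbb{N}$, let ${}^*\mathbb{R} = \mathbb{R}^{\mathbb{N}}/\mathcal{U}$ be the ultrapower: elements are classes $[(x_n)]$ of real sequences with $[(x_n)] = [(y_n)]$ iff $\{n : x_n = y_n\} \in \mathcal{U}$, operations componentwise, and $[(x_n)] < [(y_n)]$ iff $\{n : x_n < y_n\} \in \mathcal{U}$. Set $\alpha = [(n)_n]$, $\sqrt{\alpha} = [(n^{1/2})_n]$, $\alpha^{1/4} = [(n^{1/4})_n]$, and $\mathrm{num}_{\mathcal{U}}(S) = [(f_n(S))_n]$ (the $\alpha$-numerosity of $S$). *)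

From HB Require Import structures.
From mathcomp Require Import all_boot all_order all_algebra.
From mathcomp Require Import all_classical all_reals all_analysis.
From mathcomp Require Import Rstruct Rstruct_topology.
Set Implicit Arguments. Unset Strict Implicit. Unset Printing Implicit Defensive.
Import Order.TTheory GRing.Theory Num.Theory.
Local Open Scope classical_set_scope.
Local Open Scope ring_scope.

Notation R := Rdefinitions.R.

Definition log2 (x : R) : R := ln x / ln 2.

Definition inSS (n : nat) : bool :=
  (2 <= n)%N && odd `|Num.ceil (log2 (log2 n%:R))|%N.

Definition fcount (P : pred nat) (n : nat) : nat := count P (iota 1 n).

Definition free_ultrafilter (U : set (set nat)) : Prop :=
  U setT /\ ~ U set0 /\
  (forall A B, A `<=` B -> U A -> U B) /\
  (forall A B, U A -> U B -> U (A `&` B)) /\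
  (forall A, U A \/ U (~` A)) /\
  (forall A, finite_set A -> ~ U A).

(* strict order of the ultrapower R^N/U on representatives:
   [(x_n)] < [(y_n)] iff {n | x_n < y_n} \in U *)
Definition ult (U : set (set nat)) (x y : nat -> R) : Prop :=
  U [set n | x n < y n].

Definition alpha_seq : nat -> R := fun n => n%:R.
Definition sqrt_alpha_seq : nat -> R := fun n => Num.sqrt (n%:R).
Definition qrt_alpha_seq : nat -> R := fun n => (n%:R) `^ (4%:R)^-1.
Definition num_seq (P : pred nat) : nat -> R := fun n => (fcount P n)%:R.

(* With [D k = 2^(2^k)], the integers [m] with [D k < m <= D (k+1)] all satisfy
   [ceil (log2 (log2 m)) = k + 1], so the set [S] consists of whole blocks
   [(D k, D (k+1)]] with [k+1] odd.  Hence the count [g k] of [S] below [D k]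
   satisfies [g (k+1) = g k + [k+1 odd] (D (k+1) - D k)] with [0 < g k < D k].
   Since [D (k+1) = D k ^ 2], at [n = D (k+2)] with [k] odd the count is
   [n - sqrt n] up to an error in [(0, n^(1/4))], and at [n = D (k+3)] it is
   the same number, now [sqrt n] up to an error in [(-n^(1/4), 0)].  An
   ultrafilter containing one of the two sets of such [n] sees these bounds
   almost everywhere. *)
From HB Require Import structures.
From mathcomp Require Import all_boot all_order all_algebra.
From mathcomp Require Import all_classical all_reals all_analysis.
From mathcomp Require Import Rstruct Rstruct_topology.
From mathcomp Require Import zify lra.
Import Order.TTheory GRing.Theory Num.Theory.
Local Open Scope classical_set_scope.
Local Open Scope ring_scope.

Lemma ln2_gt0 : 0 < ln (2 : R).
Proof. by apply: ln_gt0; rewrite ltr1n. Qed.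

Lemma ler_log2 (x y : R) : 0 < x -> 0 < y -> (log2 x <= log2 y) = (x <= y).
Proof.
move=> x_gt0 y_gt0; rewrite /log2 ler_pM2r ?invr_gt0 ?ln2_gt0 //.
by rewrite ler_ln ?posrE.
Qed.

Lemma ltr_log2 (x y : R) : 0 < x -> 0 < y -> (log2 x < log2 y) = (x < y).
Proof.
move=> x_gt0 y_gt0; rewrite /log2 ltr_pM2r ?invr_gt0 ?ln2_gt0 //.
by rewrite ltr_ln ?posrE.
Qed.

Lemma log2_exp2 (p : nat) : log2 (2 ^+ p) = p%:R.
Proof.
rewrite /log2 lnXn // -[_ *+ p]mulr_natr mulrAC divff ?mul1r //.
by rewrite gt_eqF // ln2_gt0.
Qed.

Lemma sqrt_natX2 (n : nat) : Num.sqrt (n ^ 2)%:R = n%:R :> R.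
Proof. by rewrite natrX sqrtr_sqr ger0_norm. Qed.

Lemma powR_natX4 (n : nat) : (n ^ 4)%:R `^ (4%:R)^-1 = n%:R :> R.
Proof. by rewrite natrX -powR_mulrn // -powRrM mulfV // powRr1. Qed.

Definition dexp2 (k : nat) : nat := 2 ^ (2 ^ k).

Lemma dexp2_ge2 k : (2 <= dexp2 k)%N.
Proof. by rewrite -{1}(expn1 2) leq_exp2l // expn_gt0. Qed.

Lemma ltn_dexp2S k : (dexp2 k < dexp2 k.+1)%N.
Proof. by rewrite ltn_exp2l // ltn_exp2l. Qed.

Lemma dexp2S k : dexp2 k.+1 = (dexp2 k ^ 2)%N.
Proof. by rewrite /dexp2 expnS mulnC expnM. Qed.

Lemma ler_log2_dexp2 (m k : nat) : (0 < m)%N ->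
  (log2 m%:R <= (2 ^ k)%:R) = (m <= dexp2 k)%N.
Proof.
move=> m_gt0; rewrite -[(2 ^ k)%:R]log2_exp2 ler_log2 ?ltr0n ?exprn_gt0 //.
by rewrite -natrX ler_nat.
Qed.

Lemma ltr_dexp2_log2 (m k : nat) : (0 < m)%N ->
  ((2 ^ k)%:R < log2 m%:R) = (dexp2 k < m)%N.
Proof.
move=> m_gt0; rewrite -[(2 ^ k)%:R]log2_exp2 ltr_log2 ?ltr0n ?exprn_gt0 //.
by rewrite -natrX ltr_nat.
Qed.

Lemma ceil_log2_log2 (m k : nat) : (dexp2 k < m <= dexp2 k.+1)%N ->
  Num.ceil (log2 (log2 m%:R)) = k.+1%:Z.
Proof.
case/andP=> lt_km le_mk1; have m_gt0 : (0 < m)%N by apply: leq_ltn_trans lt_km.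
have lt_k_log : (2 ^ k)%:R < log2 m%:R by rewrite ltr_dexp2_log2.
have log_gt0 : 0 < log2 m%:R by apply: le_lt_trans lt_k_log.
apply: ceil_def; apply/andP; split.
  rewrite -addn1 PoszD addrK -[X in X < _]/(k%:R) -[k%:R]log2_exp2.
  by rewrite ltr_log2 ?exprn_gt0 // -natrX.
rewrite -[X in _ <= X]/(k.+1%:R) -[k.+1%:R]log2_exp2.
by rewrite ler_log2 ?exprn_gt0 // -natrX ler_log2_dexp2.
Qed.

Lemma inSS_block (m k : nat) : (dexp2 k < m <= dexp2 k.+1)%N ->
  inSS m = odd k.+1.
Proof.
move=> mk; rewrite /inSS (@ceil_log2_log2 m k mk) /=.
by case/andP: mk => /ltnW /(leq_trans (dexp2_ge2 k)) ->.
Qed.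

Definition cntSS (k : nat) : nat := fcount inSS (dexp2 k).

Lemma cntSS_S k : cntSS k.+1 = (cntSS k + odd k.+1 * (dexp2 k.+1 - dexp2 k))%N.
Proof.
rewrite /cntSS /fcount -(subnKC (ltnW (ltn_dexp2S k))) iotaD count_cat addKn.
congr (_ + _)%N; rewrite (@eq_in_count _ _ (fun=> odd k.+1)); last first.
  move=> m; rewrite mem_iota => mk; apply: inSS_block.
  by have := ltn_dexp2S k; lia.
by case: (odd k.+1); rewrite ?count_predT ?size_iota ?mul1n ?count_pred0.
Qed.

Lemma cntSS_lt k : (cntSS k < dexp2 k)%N.
Proof.
rewrite /cntSS /fcount -(prednK (ltnW (dexp2_ge2 k))) /=.
by apply: leq_ltn_trans (count_size _ _) _; rewrite size_iota.
Qed.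

Lemma cntSS_gt0 k : (0 < k)%N -> (0 < cntSS k)%N.
Proof.
case: k => // k _; elim: k => [|k IHk]; rewrite cntSS_S.
  by have := ltn_dexp2S 0; rewrite /= mul1n; lia.
exact: leq_trans IHk (leq_addr _ _).
Qed.

Lemma cntSS_odd j : odd j ->
  cntSS j.+2 = (cntSS j + (dexp2 j.+2 - dexp2 j.+1))%N.
Proof. by move=> oj; rewrite !cntSS_S /= oj /= mul0n addn0 mul1n. Qed.

Lemma cntSS_oddS j : odd j -> cntSS j.+3 = cntSS j.+2.
Proof. by move=> oj; rewrite cntSS_S /= oj /= mul0n addn0. Qed.

Lemma cntSS_odd_window j : odd j ->
  (dexp2 j.+2 < cntSS j.+2 + dexp2 j.+1 < dexp2 j.+2 + dexp2 j)%N.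
Proof.
move=> oj; rewrite cntSS_odd //.
have := @cntSS_gt0 j (odd_gt0 oj); have := cntSS_lt j.
have := ltn_dexp2S j; have := ltn_dexp2S j.+1; lia.
Qed.

Lemma dexp2SS k : dexp2 k.+2 = (dexp2 k ^ 4)%N.
Proof. by rewrite !dexp2S -expnM. Qed.

Lemma sqrt_dexp2S k : Num.sqrt (dexp2 k.+1)%:R = (dexp2 k)%:R :> R.
Proof. by rewrite dexp2S sqrt_natX2. Qed.

Lemma powR_dexp2SS k : (dexp2 k.+2)%:R `^ (4%:R)^-1 = (dexp2 k)%:R :> R.
Proof. by rewrite dexp2SS powR_natX4. Qed.

Lemma cntSS_near_alpha_sub_sqrt j : odd j ->
  (dexp2 j.+2)%:R - Num.sqrt (dexp2 j.+2)%:R < (cntSS j.+2)%:R :> R /\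
  (cntSS j.+2)%:R < (dexp2 j.+2)%:R - Num.sqrt (dexp2 j.+2)%:R
                    + (dexp2 j.+2)%:R `^ (4%:R)^-1 :> R.
Proof.
move=> oj; rewrite sqrt_dexp2S powR_dexp2SS.
move: (@cntSS_odd_window j oj); rewrite -!(ltr_nat R) !natrD.
by case/andP=> lo hi; split; lra.
Qed.

Lemma cntSS_near_sqrt j : odd j ->
  Num.sqrt (dexp2 j.+3)%:R - (dexp2 j.+3)%:R `^ (4%:R)^-1
    < (cntSS j.+3)%:R :> R /\
  (cntSS j.+3)%:R < Num.sqrt (dexp2 j.+3)%:R :> R.
Proof.
move=> oj; rewrite sqrt_dexp2S powR_dexp2SS cntSS_oddS //.
move: (@cntSS_odd_window j oj) (ltn_dexp2S j); rewrite -!(ltr_nat R) !natrD.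
by case/andP=> lo hi lt01; split; lra.
Qed.

Lemma free_ultrafilter_sub_setD1 U A B (x : nat) : free_ultrafilter U -> U A ->
  A `\ x `<=` B -> U B.
Proof.
move=> [_ [_ [Umono [UI [Ucompl Ufin]]]]] UA AB.
have Ux : U (~` [set x]).
  by case: (Ucompl [set x]) => // /(Ufin _ (finite_set1 x)).
exact: Umono AB (UI _ _ UA Ux).
Qed.

Theorem mainTheorem5 (U : set (set nat)) (HU : free_ultrafilter U) :
  (U [set (2 ^ (2 ^ k))%N | k in [set k : nat | (0 < k)%N /\ odd k]] ->
     ult U (fun n => alpha_seq n - sqrt_alpha_seq n) (num_seq inSS) /\
     ult U (num_seq inSS)
           (fun n => alpha_seq n - sqrt_alpha_seq n + qrt_alpha_seq n))
  /\
  (U [set (2 ^ (2 ^ k))%N | k in [set k : nat | (0 < k)%N /\ ~~ odd k]] ->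
     ult U (fun n => sqrt_alpha_seq n - qrt_alpha_seq n) (num_seq inSS) /\
     ult U (num_seq inSS) sqrt_alpha_seq).
Proof.
(* The exceptional points are [n = 4] ([k = 1]) and [n = 16] ([k = 2]). *)
split=> Udexp2.
  split; apply: (@free_ultrafilter_sub_setD1 U _ _ 4%N HU Udexp2);
    move=> _ [[k [_ ok] <-] /eqP ne4]; case: k ok ne4 => [|[|j]] // oj _;
    have [lo hi] := @cntSS_near_alpha_sub_sqrt j (negbNE oj); exact.
split; apply: (@free_ultrafilter_sub_setD1 U _ _ 16%N HU Udexp2);
  move=> _ [[k [k_gt0 ok] <-] /eqP ne16];
  case: k k_gt0 ok ne16 => [|[|[|j]]] // _ oj _;
  have [lo hi] := @cntSS_near_sqrt j (negbNE (negbNE oj)); exact.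
Qed.
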